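(* Let $\psi$, $s_0$ and $r=r_\psi$ be as in the context, and let $C_r\ge1$ and $s_*$ be such that $r(s_2)\le C_rr(s_1)$ whenever $s_*\le s_1\le s_2\le s_1+s_1^\eta$. For each integer $k\ge s_0$ define $$\overline E_k=\{A\in M_{m,n}(\mathbb R/\mathbb Z): g_k\Lambda_A\in\widetilde\Delta_{\omega_1C_rr(k)}\},\qquad \underline E_k=\{A\in M_{m,n}(\mathbb R/\mathbb Z): g_k\Lambda_A\in\widetilde\Delta_{\omega_2C_r^{-1}r(k+1)}\}.$$ Then $\limsup_{k\to\infty}\underline E_k\subset \mathbf{DI}_{\boldsymbol\alpha,\boldsymbol\beta}(\psi)^c\subset\limsup_{k\to\infty}\overline E_k$.
   Context: $d=m+n$; weight vectors $\boldsymbol\alpha\in(\mathbb R_{>0})^m$, $\boldsymbol\beta\in(\mathbb R_{>0})^n$ with coordinates summing to 1; $\omega_1=\max\{m\alpha_i,n\beta_j\}$, $\omega_2=\min\{m\alpha_i,n\beta_j\}$. $g_s=\mathrm{diag}(e^{\alpha_1s},\dots,e^{\alpha_ms},e^{-\beta_1s},\dots,e^{-\beta_ns})$; $\Lambda_A=\begin{pmatrix}I_m&A\\0&I_n\end{pmatrix}\mathbb Z^d$. $X_d$ is the space of unimodular lattices in $\mathbb R^d$; $\Delta(\Lambda)=\sup_{\mathbf v\in\Lambda\setminus\{0\}}\log(1/\|\mathbf v\|)$ (sup norm); $\widetilde\Delta_\rho:=\bigcup_{0\le s<1}g_{-s}\Delta^{-1}[0,\rho]$. Standing assumptions on $\psi$: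 $t_0>1$, $\psi:[t_0,\infty)\to(0,\infty)$ continuous and decreasing, $\frac1{2t}\le\psi(t)<\frac1t$, and there exist $C_\psi\ge1,\eta\in(0,1)$ with $F_\psi(t_2)\le C_\psi F_\psi(t_1)$ for $t_0\le t_1\le t_2\le t_1e^{(\log t_1)^\eta}$, $F_\psi(t)=1-t\psi(t)$. $s_0=\frac md\log t_0-\frac nd\log\psi(t_0)$, and $r(s)=-\frac1d\log(t\psi(t))$ where $t=t(s)$ solves $s=\frac md\log t-\frac nd\log\psi(t)$ (such $C_r,s_*$ exist). $\mathbf{DI}_{\boldsymbol\alpha,\boldsymbol\beta}(\psi)\subset M_{m,n}(\mathbb R/\mathbb Z)$ is the set of $A$ such that for all sufficiently large $t$ there exist $\mathbf p\in\mathbb Z^m,\mathbf q\in\mathbb Z^n\setminus\{0\}$ with $\max_i|(A\mathbf q-\mathbf p)_i|^{1/\alpha_i}<\psi(t)$ and $\max_j|q_j|^{1/\beta_j}<t$. *)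

From HB Require Import structures.
From mathcomp Require Import all_boot all_order all_algebra.
From mathcomp Require Import all_classical all_reals all_analysis.
Set Implicit Arguments. Unset Strict Implicit. Unset Printing Implicit Defensive.
Import Order.TTheory GRing.Theory Num.Theory numFieldTopology.Exports numFieldNormedType.Exports.
Local Open Scope classical_set_scope.
Local Open Scope ring_scope.

Section Defs.
Variables (R : realType) (m n : nat).
Notation d := (m + n)%N.

Definition supnorm (v : 'cV[R]_d) : R := \big[Num.max/0]_(i < d) `|v i ord0|.

Definition latt (M : 'M[R]_d) : set 'cV[R]_d :=
  [set M *m map_mx (fun z : int => z%:~R) z | z in [set: 'cV[int]_d]].

Definition Xd : set (set 'cV[R]_d) :=
  [set L | exists M : 'M[R]_d, \det M = 1 /\ L = latt M].

Definition Delta (L : set 'cV[R]_d) : \bar R :=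
  ereal_sup [set ((ln (supnorm v)^-1)%:E) | v in L `\ 0].

Definition DeltaInv (rho : R) : set (set 'cV[R]_d) :=
  [set L | Xd L /\ (0 <= Delta L)%E /\ (Delta L <= rho%:E)%E].

Definition gmat (alpha : 'I_m -> R) (beta : 'I_n -> R) (s : R) : 'M[R]_d :=
  diag_mx (row_mx (\row_i expR (alpha i * s)) (\row_j expR (- (beta j * s)))).

Definition gact alpha beta (s : R) (L : set 'cV[R]_d) : set 'cV[R]_d :=
  (fun v => gmat alpha beta s *m v) @` L.

Definition DeltaTilde alpha beta (rho : R) : set (set 'cV[R]_d) :=
  [set L | exists s : R, 0 <= s /\ s < 1 /\
     exists L', DeltaInv rho L' /\ L = gact alpha beta (- s) L'].

(* Lambda_A = [[I_m, A], [0, I_n]] Z^d ; A is a real representative of a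
   point of M_{m,n}(R/Z) *)
Definition latticeA (A : 'M[R]_(m, n)) : set 'cV[R]_d :=
  latt (block_mx 1%:M A 0 1%:M).

Definition omega1 (alpha : 'I_m -> R) (beta : 'I_n -> R) : R :=
  Num.max (\big[Num.max/0]_(i < m) (m%:R * alpha i))
          (\big[Num.max/0]_(j < n) (n%:R * beta j)).

Definition omega2 (alpha : 'I_m -> R) (beta : 'I_n -> R) : R :=
  Num.min (\big[Num.min/omega1 alpha beta]_(i < m) (m%:R * alpha i))
          (\big[Num.min/omega1 alpha beta]_(j < n) (n%:R * beta j)).

Definition Fpsi (psi : R -> R) (t : R) : R := 1 - t * psi t.

Definition psi_standing (psi : R -> R) (t0 Cpsi eta : R) : Prop :=
  1 < t0 /\
  {within [set t : R | t0 <= t], continuous psi} /\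
  (forall t1 t2, t0 <= t1 -> t1 <= t2 -> psi t2 <= psi t1) /\
  (forall t, t0 <= t -> (2 * t)^-1 <= psi t /\ psi t < t^-1) /\
  1 <= Cpsi /\ 0 < eta /\ eta < 1 /\
  (forall t1 t2, t0 <= t1 -> t1 <= t2 -> t2 <= t1 * expR (ln t1 `^ eta) ->
     Fpsi psi t2 <= Cpsi * Fpsi psi t1).

Definition sfun (psi : R -> R) (t : R) : R :=
  m%:R / d%:R * ln t - n%:R / d%:R * ln (psi t).

Definition s0 (psi : R -> R) (t0 : R) : R := sfun psi t0.

Definition tof (psi : R -> R) (t0 : R) (s : R) : R :=
  xget t0 [set t | t0 <= t /\ sfun psi t = s].

Definition rpsi (psi : R -> R) (t0 : R) (s : R) : R :=
  - (d%:R)^-1 * ln (tof psi t0 s * psi (tof psi t0 s)).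

Definition DI alpha beta (psi : R -> R) : set 'M[R]_(m, n) :=
  [set A | exists T : R, forall t, T <= t ->
     exists (p : 'cV[int]_m) (q : 'cV[int]_n), q != 0 /\
       (forall i, `|(A *m map_mx (fun z : int => z%:~R) q
                     - map_mx (fun z : int => z%:~R) p) i ord0| `^ (alpha i)^-1 < psi t) /\
       (forall j, `|((q j ord0)%:~R : R)| `^ (beta j)^-1 < t)].

Definition Ebar alpha beta psi t0 (Cr : R) (k : nat) : set 'M[R]_(m, n) :=
  [set A | DeltaTilde alpha beta (omega1 alpha beta * Cr * rpsi psi t0 k%:R)
             (gact alpha beta k%:R (latticeA A))].

Definition Eunder alpha beta psi t0 (Cr : R) (k : nat) : set 'M[R]_(m, n) :=
  [set A | DeltaTilde alpha beta (omega2 alpha beta * Cr^-1 * rpsi psi t0 (k.+1)%:R)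
             (gact alpha beta k%:R (latticeA A))].

Definition limsupk (lo : R) (E : nat -> set 'M[R]_(m, n)) : set 'M[R]_(m, n) :=
  [set A | forall K : nat, exists k : nat, (K <= k)%N /\ lo <= k%:R /\ E k A].

End Defs.

(* Writing [s = sfun t], the inequalities defining [DI] at time [t] say
   exactly that [g_s Lambda_A] contains a nonzero vector whose coordinates are
   below [exp (- m alpha_i r(s))] and [exp (- n beta_j r(s))].  Hence a solution
   at [t] gives a vector of sup-norm [< exp (- omega2 r(s))], and a vector of
   sup-norm [< exp (- omega1 r(s))] gives a solution (vectors with [q = 0] are
   too long, their top block being a nonzero integer vector expanded by [g_s]).
   Since [r(s') <= C_r r(s)] for [s <= s' <= s + 1], moving from [s] to the
   integers [floor s] or [floor s + 1] costs only the factor [C_r]; finally the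
   weighted Dirichlet theorem gives [Delta (g_s Lambda_A) >= 0]. *)

From Pilot Require Import Defs.
From HB Require Import structures.
From mathcomp Require Import all_boot all_order all_algebra.
From mathcomp Require Import all_classical all_reals all_analysis.
Import Order.TTheory GRing.Theory Num.Theory numFieldTopology.Exports numFieldNormedType.Exports.
Local Open Scope classical_set_scope.
Local Open Scope ring_scope.
From mathcomp Require Import ring lra.

Local Notation intmx := (map_mx (fun z : int => z%:~R)).

Lemma card_dffun_ord (I : finType) (B : I -> nat) :
  #|{dffun forall l : I, 'I_(B l)}| = (\prod_l B l)%N.
Proof.
rewrite card_dep_ffun foldrE big_map big_enum /=.
by apply: eq_bigr => l _; rewrite card_ord.
Qed.

Lemma pigeonhole_congr (D I : finType) (N : nat) (K : D -> I -> int) :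
  (N.+1 ^ #|I| < #|D|)%N ->
  exists x y, x != y /\ forall l, (N.+1%:Z %| K x l - K y l)%Z.
Proof.
move=> cardD.
pose res (x : D) : {ffun I -> 'I_N.+1} := [ffun l => inord `|(K x l %% N.+1)%Z|%N].
have /injectivePn [x [y xy resxy]] : ~~ injectiveb res.
  by apply: contraL cardD => /injectiveP/leq_card; rewrite card_ffun card_ord leqNgt.
exists x, y; split => // l; rewrite -eqz_mod_dvd.
have res_lt z : (`|(K z l %% N.+1)%Z|%N < N.+1)%N.
  by rewrite -ltz_nat gez0_abs ?modz_ge0 ?ltz_pmod.
move/(congr1 (fun f : {ffun I -> 'I_N.+1} => val (f l))): resxy; rewrite !ffunE /= !inordK // => /eqP.
by rewrite -eqz_nat !gez0_abs ?modz_ge0.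
Qed.

(* [N] is chosen so large that rounding [N c w_l] down loses less than
   [N (c - 1) / 2 * w_l]; then [\prod_l B l > (N (1 + c) / 2)^#|I| >= N^#|I|]. *)
Lemma big_integer_box (R : realType) (I : finType) (w : I -> R) (c : R) :
  (0 < #|I|)%N -> (forall l, 0 < w l) -> \prod_l w l = 1 -> 1 < c ->
  exists N (B : I -> nat),
    (forall l, (B l)%:R <= N.+1%:R * c * w l) /\ (N.+1 ^ #|I| < \prod_l B l)%N.
Proof.
move=> I0 w0 w1 c1.
pose S := \sum_l 2 / ((c - 1) * w l).
pose N := Num.truncn S.
pose B l := Num.truncn (N.+1%:R * c * w l).
pose c' := (1 + c) / 2.
have NS : S < N.+1%:R by exact: truncnS_gt.
have N0 : 0 < N.+1%:R :> R by rewrite ltr0n.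
have Bw_ge0 l : 0 <= N.+1%:R * c * w l.
  by apply: mulr_ge0; [apply: mulr_ge0; lra | exact/ltW].
have B_gt l : N.+1%:R * c' * w l < (B l)%:R.
  have Sl : 2 / ((c - 1) * w l) < N.+1%:R.
    apply: le_lt_trans NS; rewrite /S (bigD1 l) //= lerDl.
    by apply: sumr_ge0 => k _; apply: divr_ge0 => //; apply: mulr_ge0; [lra | exact/ltW].
  have cw0 : 0 < (c - 1) * w l by apply: mulr_gt0 => //; lra.
  move: Sl; rewrite ltr_pdivrMr // => Sl.
  have := truncnS_gt (N.+1%:R * c * w l); rewrite -/(B l) -natr1 /c'.
  have := w0 l; nra.
exists N, B; split => [l | ]; first by rewrite truncn_le.
rewrite -(ltr_nat R) natrX natr_prod.
have lt_prod : \prod_l (N.+1%:R * c' * w l) < \prod_l (B l)%:R.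
  apply: ltr_prod => [|l _].
    by case/card_gt0P: I0 => l _; apply/hasP; exists l; rewrite ?mem_index_enum.
  rewrite B_gt andbT; apply: mulr_ge0; last exact/ltW.
  by apply: mulr_ge0; rewrite /c'; lra.
apply: le_lt_trans lt_prod.
rewrite big_split /= w1 mulr1 prodr_const.
have c'1 : 1 <= c' by rewrite /c'; lra.
by rewrite lerXn2r ?nnegrE ?ler_peMr // ?(ltW N0) //; apply: mulr_ge0; lra.
Qed.


Lemma ltr_dist_itv {R : realDomainType} {a b B : R} :
  -1 < a <= B - 1 -> -1 < b <= B - 1 -> `|a - b| < B.
Proof. by case/andP=> ? ? /andP[? ?]; rewrite ltr_norml; apply/andP; split; lra. Qed.

(* Pigeonhole: among the integer points [x] of a big box, two have all the
   integers [K x l] congruent modulo [N]; their difference, divided by [N],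
   is the required solution. *)
Lemma dirichlet {R : realType} {m n} (A : 'M[R]_(m, n)) (X : 'I_n -> R) (Y : 'I_m -> R) (c : R) :
  (0 < m + n)%N -> (forall j, 0 < X j) -> (forall i, 0 < Y i) ->
  (\prod_j X j) * (\prod_i Y i) = 1 -> 1 < c ->
  exists (u : 'cV[int]_m) (v : 'cV[int]_n), col_mx u v != 0 /\
    (forall j, `|((v j 0)%:~R : R)| <= c * X j) /\
    (forall i, `|(A *m intmx v + intmx u) i 0| <= c * Y i).
Proof.
move=> d0 X0 Y0 XY c1.
pose w (l : 'I_m + 'I_n) := match l with inl i => Y i | inr j => X j end.
have card_I : #|{: 'I_m + 'I_n}| = (m + n)%N by rewrite card_sum !card_ord.
have [N [B [Bw NB]]] : exists N (B : 'I_m + 'I_n -> nat),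
    (forall l, (B l)%:R <= N.+1%:R * c * w l) /\ (N.+1 ^ #|{: 'I_m + 'I_n}| < \prod_l B l)%N.
  apply: big_integer_box => //.
  - by rewrite card_I.
  - by case.
  - by rewrite big_sumType /= mulrC.
pose D := {dffun forall l : 'I_m + 'I_n, 'I_(B l)}.
pose bv (x : D) : 'cV[R]_n := \col_j (x (inr j) : nat)%:R.
pose fl (x : D) i := Num.floor (- (A *m bv x) i 0).
pose h (x : D) i := (A *m bv x) i 0 + (fl x i)%:~R + (x (inl i) : nat)%:R.
pose K (x : D) l : int := match l with
  | inl i => fl x i + (x (inl i) : nat)%:Z
  | inr j => (x (inr j) : nat)%:Z end.
have [x [y [xy dvdK]]] : exists x y, x != y /\ forall l, (N.+1%:Z %| K x l - K y l)%Z.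
  by apply: (@pigeonhole_congr D _ N K); rewrite card_dffun_ord.
pose q l := ((K x l - K y l) %/ N.+1%:Z)%Z.
have qE l : q l * N.+1%:Z = K x l - K y l by rewrite divzK.
have qRE l : ((q l)%:~R : R) * N.+1%:R = (K x l)%:~R - (K y l)%:~R.
  by rewrite -[N.+1%:R]/((N.+1%:Z)%:~R : R) -intrM qE intrB.
pose u : 'cV[int]_m := \col_i q (inl i).
pose v : 'cV[int]_n := \col_j q (inr j).
have AvE i : (A *m intmx v) i 0 * N.+1%:R = (A *m bv x) i 0 - (A *m bv y) i 0.
  rewrite !mxE mulr_suml -sumrB; apply: eq_bigr => j _.
  by rewrite !mxE -mulrA qRE mulrBr.
have uE i : (A *m intmx v + intmx u) i 0 * N.+1%:R = h x i - h y i.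
  by rewrite /h mxE mulrDl AvE !mxE qRE /= !intrD -!pmulrn; ring.
have ord_range (z : D) (l : 'I_m + 'I_n) : -1 < ((z l : nat)%:R : R) <= (B l)%:R - 1.
  by rewrite lerBrDr natr1 ler_nat ltn_ord andbT; have := ler0n R (z l); lra.
have h_range (z : D) i : -1 < h z i <= (B (inl i))%:R - 1.
  have /andP[fl1 fl2] := floor_itv (- (A *m bv z) i 0).
  have /andP[_ z2] := ord_range z (inl i).
  have z0 := ler0n R (z (inl i)); rewrite intrD rmorph1 in fl2.
  by rewrite /h /fl; apply/andP; split; lra.
exists u, v; split; [|split].
- apply: contra xy; rewrite col_mx_eq0 => /andP[/eqP u0 /eqP v0].
  have Kxy l : K x l = K y l.
    apply/eqP; rewrite -subr_eq0 -qE; apply/eqP.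
    case: l => [i | j]; [move/matrixP: u0 => /(_ i 0) | move/matrixP: v0 => /(_ j 0)];
    by rewrite !mxE => ->; rewrite mul0r.
  have xyr j : x (inr j) = y (inr j) by apply/val_inj; case: (Kxy (inr j)).
  have bvxy : bv x = bv y by apply/matrixP => j k; rewrite !mxE xyr.
  apply/eqP/ffunP => -[i | j]; last exact: xyr.
  by apply/val_inj; move: (Kxy (inl i)); rewrite /= /fl bvxy => /addrI [].
- move=> j; rewrite mxE.
  have := ltr_dist_itv (ord_range x (inr j)) (ord_range y (inr j)).
  rewrite -[_ - _](qRE (inr j)) normrM normr_nat => /lt_le_trans/(_ (Bw (inr j))).
  by rewrite -mulrA [X in _ < X]mulrC ltr_pM2r ?ltr0n // => /ltW.
- move=> i; have := ltr_dist_itv (h_range x i) (h_range y i).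
  rewrite -uE normrM normr_nat => /lt_le_trans/(_ (Bw (inl i))).
  by rewrite -mulrA [X in _ < X]mulrC ltr_pM2r ?ltr0n // => /ltW.
Qed.

Section Flow.
Context {R : realType} {m n : nat}.
Variables (alpha : 'I_m -> R) (beta : 'I_n -> R).
Local Notation g := (gmat alpha beta).
Local Notation uA A := (block_mx 1%:M A 0 1%:M).

Lemma gmatD s s' : g s *m g s' = g (s + s').
Proof.
rewrite /gmat mul_diag_mx; apply/matrixP => i j; rewrite !mxE.
rewrite -[i]splitK; case: (fintype.split i) => k; rewrite !unsplitK /= !mxE mulrnAr.
  by rewrite -expRD mulrDr.
by rewrite -expRD mulrDr opprD.
Qed.

Lemma gmat0 : g 0 = 1%:M.
Proof.
rewrite /gmat -diag_const_mx; congr diag_mx; apply/matrixP => i j; rewrite !mxE.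
by rewrite -[j]splitK; case: (fintype.split j) => k; rewrite !unsplitK /= !mxE mulr0 ?oppr0 expR0.
Qed.

Lemma det_gmat s : \sum_i alpha i = 1 -> \sum_j beta j = 1 -> \det (g s) = 1.
Proof.
move=> sa sb; rewrite /gmat det_diag big_split_ord /=.
under eq_bigr do rewrite row_mxEl mxE.
under [X in _ * X]eq_bigr do rewrite row_mxEr mxE.
by rewrite -!expR_sum -expRD sumrN -!mulr_suml sa sb mul1r addrN expR0.
Qed.

Lemma gactD s s' L : gact alpha beta s (gact alpha beta s' L) = gact alpha beta (s + s') L.
Proof. by rewrite /gact image_comp; apply: eq_imagel => v _ /=; rewrite mulmxA gmatD. Qed.

Lemma gact0 L : gact alpha beta 0 L = L.
Proof.
rewrite /gact gmat0 (_ : (fun v => 1%:M *m v) = id) ?image_id //.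
by apply: funext => v; rewrite mul1mx.
Qed.

Lemma gact_latt s M : gact alpha beta s (latt M) = latt (g s *m M).
Proof. by rewrite /gact /latt image_comp; apply: eq_imagel => v _ /=; rewrite mulmxA. Qed.

Lemma det_gmat_unipotent s A : \sum_i alpha i = 1 -> \sum_j beta j = 1 ->
  \det (g s *m uA A) = 1.
Proof. by move=> sa sb; rewrite det_mulmx det_gmat // det_ublock !det1 !mul1r. Qed.

Lemma gmat_unipotent_lshift s A (u : 'cV[int]_m) (v : 'cV[int]_n) i :
  (g s *m uA A *m intmx (col_mx u v)) (lshift n i) 0 =
  expR (alpha i * s) * (intmx u + A *m intmx v) i 0.
Proof.
rewrite -mulmxA map_col_mx mul_block_col !mul1mx mul0mx add0r /gmat mul_diag_mx.
by rewrite mxE col_mxEu row_mxEl !mxE.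
Qed.

Lemma gmat_unipotent_rshift s A (u : 'cV[int]_m) (v : 'cV[int]_n) j :
  (g s *m uA A *m intmx (col_mx u v)) (rshift m j) 0 =
  expR (- (beta j * s)) * (v j 0)%:~R.
Proof.
rewrite -mulmxA map_col_mx mul_block_col !mul1mx mul0mx add0r /gmat mul_diag_mx.
by rewrite mxE col_mxEd row_mxEr !mxE.
Qed.

End Flow.

Section Supnorm.
Context {R : realType} {m n : nat}.

Lemma normr_le_supnorm (v : 'cV[R]_(m + n)) i : `|v i 0| <= supnorm v.
Proof. exact: (le_bigmax _ (fun i => `|v i 0|)). Qed.

Lemma supnorm_le (v : 'cV[R]_(m + n)) c : 0 <= c -> (forall i, `|v i 0| <= c) -> supnorm v <= c.
Proof. by move=> c0 h; apply: bigmax_le. Qed.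

Lemma supnorm_lt (v : 'cV[R]_(m + n)) c : 0 < c -> (forall i, `|v i 0| < c) -> supnorm v < c.
Proof. by move=> c0 h; apply: bigmax_lt. Qed.

Lemma supnorm_gt0 (v : 'cV[R]_(m + n)) : v != 0 -> 0 < supnorm v.
Proof.
move=> v0; have [i vi0] : exists i, v i 0 != 0.
  apply/not_existsP => h; move/negP: v0; apply; apply/eqP/matrixP => i j.
  by rewrite (ord1 j) mxE; apply/eqP; apply/negPn/negP => /h.
by apply: lt_le_trans (normr_le_supnorm v i); rewrite normr_gt0.
Qed.

Lemma Delta_leP (L : set 'cV[R]_(m + n)) rho :
  (Delta L <= rho%:E)%E <-> forall v, L v -> v != 0 -> expR (- rho) <= supnorm v.
Proof.
split=> [DL v Lv v0 | short].
- have v_pos := supnorm_gt0 _ v0.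
  have : ((ln (supnorm v)^-1)%:E <= Delta L)%E.
    by apply: ereal_sup_ubound; exists v => //; split => //; exact/eqP.
  move=> /le_trans /(_ DL); rewrite lee_fin lnV ?posrE // lerNl => h.
  by rewrite -[X in _ <= X]lnK ?posrE // ler_expR.
- apply: ge_ereal_sup => _ [v [Lv /eqP v0] <-]; rewrite lee_fin.
  have v_pos := supnorm_gt0 _ v0.
  rewrite lnV ?posrE // lerNl -(expRK (- rho)) ler_ln ?posrE ?expR_gt0 //.
  exact: short.
Qed.

Lemma Delta_ge0 (L : set 'cV[R]_(m + n)) :
  (forall e, 0 < e -> exists v, L v /\ v != 0 /\ supnorm v <= expR e) -> (0 <= Delta L)%E.
Proof.
move=> short.
have lb e : 0 < e -> ((- e)%:E <= Delta L)%E.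
  move=> e0; have [v [Lv [v0 hv]]] := short e e0.
  have v_pos := supnorm_gt0 _ v0.
  apply: le_ereal_sup_tmp; exists (ln (supnorm v)^-1)%:E.
    by exists v => //; split => //; exact/eqP.
  by rewrite lee_fin lnV ?posrE // lerN2 -(expRK e) ler_ln ?posrE ?expR_gt0.
move: lb; case: (Delta L) => [r| |] lb //; last by have := lb 1 ltr01.
rewrite lee_fin leNgt; apply/negP => r0.
by have := lb (- r / 2); rewrite lee_fin => /(_ _); lra.
Qed.

Lemma mulmx_intmx_neq0 (M : 'M[R]_(m + n)) (z : 'cV[int]_(m + n)) :
  M \in unitmx -> z != 0 -> M *m intmx z != 0.
Proof.
move=> uM; apply: contra => /eqP Mz0.
have : intmx z = 0 :> 'cV[R]_(m + n) by rewrite -(mulKmx uM (intmx z)) Mz0 mulmx0.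
move/matrixP=> z0; apply/eqP/matrixP => i j.
by have := z0 i j; rewrite !mxE => /eqP; rewrite intr_eq0 => /eqP.
Qed.

End Supnorm.

Lemma powRV_lt_iff (R : realType) (x a P : R) : 0 <= x -> 0 < a -> 0 < P ->
  x `^ a^-1 < P <-> x < expR (a * ln P).
Proof.
move=> x0 a0 P0.
have xE : x = (x `^ a^-1) `^ a by rewrite -powRrM mulVf ?gt_eqF // powRr1.
have PE : P = (expR (a * ln P)) `^ a^-1.
  by rewrite -expRM mulrAC mulfV ?gt_eqF // mul1r lnK ?posrE.
have eP : expR (a * ln P) = P `^ a by rewrite mulrC expRM lnK ?posrE.
split => xP.
- rewrite eP [X in X < _]xE; apply: gt0_ltr_powR => //; rewrite ?nnegrE ?powR_ge0 //; exact: ltW.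
- rewrite PE; apply: gt0_ltr_powR => //; rewrite ?invr_gt0 ?nnegrE ?powR_ge0 //; exact: ltW.
Qed.

Definition DI_solution {R : realType} {m n} (alpha : 'I_m -> R) (beta : 'I_n -> R)
    (psi : R -> R) (A : 'M[R]_(m, n)) (t : R) (p : 'cV[int]_m) (q : 'cV[int]_n) : Prop :=
  q != 0 /\
  (forall i, `|(A *m intmx q - intmx p) i ord0| `^ (alpha i)^-1 < psi t) /\
  (forall j, `|((q j ord0)%:~R : R)| `^ (beta j)^-1 < t).

Section Parametrisation.
Variables (R : realType) (m n : nat) (psi : R -> R) (t0 Cpsi eta : R).
Hypothesis psiS : psi_standing psi t0 Cpsi eta.
Hypotheses (m_gt0 : (0 < m)%N) (n_gt0 : (0 < n)%N).

Local Notation sfun := (Defs.sfun m n psi).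
Local Notation rpsi := (Defs.rpsi m n psi t0).
Let dR : R := (m + n)%:R.
Let dR_gt0 : 0 < dR. Proof. by rewrite /dR ltr0n addn_gt0 m_gt0. Qed.
Let wm_gt0 : 0 < m%:R / dR. Proof. by apply: divr_gt0 dR_gt0; rewrite ltr0n. Qed.
Let wn_gt0 : 0 < n%:R / dR. Proof. by apply: divr_gt0 dR_gt0; rewrite ltr0n. Qed.
Let wmn : m%:R / dR + n%:R / dR = 1.
Proof. by rewrite -mulrDl -natrD divff // gt_eqF. Qed.

Lemma psi_standing_bounds {t} : t0 <= t ->
  [/\ 1 < t, 0 < psi t, psi t < t^-1 & (2 * t)^-1 <= psi t].
Proof.
move=> tt0; case: psiS => t01 [_ [_ [hb _]]].
have [lb ub] := hb t tt0; split => //; first lra.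
by apply: lt_le_trans lb; rewrite invr_gt0; lra.
Qed.

Lemma ln_le_sfun {t} : t0 <= t -> ln t <= sfun t.
Proof.
move=> tt0; have [t1 psi0 psi_ub _] := psi_standing_bounds tt0.
have : ln (psi t) <= - ln t.
  by rewrite -lnV ?posrE; [apply/ltW; rewrite ltr_ln ?posrE ?invr_gt0 | ]; lra.
move/(ler_wpM2l (ltW wn_gt0)).
have : m%:R / dR * ln t + n%:R / dR * ln t = ln t by rewrite -mulrDl wmn mul1r.
rewrite /Defs.sfun; lra.
Qed.

Lemma sfun_le {t} : t0 <= t -> sfun t <= t.
Proof.
move=> tt0; have [t1 psi0 _ psi_lb] := psi_standing_bounds tt0.
have ln2_ge0 : 0 <= ln (2 : R) by rewrite ln_ge0 //; lra.
have ln2_le1 : ln (2 : R) <= 1 by have := @le_ln1Dx R 1 ltac:(lra); rewrite (_ : 1 + 1 = 2).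
have lnt_le : ln t <= t - 1 by have := @le_ln1Dx R (t - 1) ltac:(lra); rewrite addrC subrK.
have : - (ln 2 + ln t) <= ln (psi t).
  rewrite -lnM ?posrE; [|lra|lra].
  by rewrite -lnV ?posrE ?ler_ln ?posrE ?invr_gt0 //; apply: mulr_gt0; lra.
move/(ler_wpM2l (ltW wn_gt0)).
have : m%:R / dR * ln t + n%:R / dR * ln t = ln t by rewrite -mulrDl wmn mul1r.
have : n%:R / dR * ln 2 <= ln (2 : R) by rewrite ler_piMl //; have := wmn; have := wm_gt0; lra.
rewrite /Defs.sfun; lra.
Qed.

Lemma ltr_sfun {t t'} : t0 <= t -> t < t' -> sfun t < sfun t'.
Proof.
move=> tt0 tt'; have t't0 : t0 <= t' by lra.
have [t1 psi0 _ _] := psi_standing_bounds tt0.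
have [t'1 psi'0 _ _] := psi_standing_bounds t't0.
case: psiS => _ [_ [psi_decr _]].
have : m%:R / dR * ln t < m%:R / dR * ln t' by rewrite ltr_pM2l // ltr_ln ?posrE //; lra.
have : ln (psi t') <= ln (psi t) by rewrite ler_ln ?posrE // psi_decr //; lra.
move/(ler_wpM2l (ltW wn_gt0)).
rewrite /Defs.sfun; lra.
Qed.

Lemma continuous_sfun b : {within `[t0, b], continuous sfun}.
Proof.
have sub : `[t0, b] `<=` [set t : R | t0 <= t] by move=> x /=; rewrite in_itv /= => /andP[].
have cpsi : {within `[t0, b], continuous psi}.
  by apply: continuous_subspaceW sub _; case: psiS => _ [].
have cln : {within `[t0, b], continuous (@ln R)}.
  apply: continuous_in_subspaceT => x; rewrite inE => /sub/psi_standing_bounds[x1 _ _ _].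
  by apply: continuous_ln; lra.
have clnpsi : {within `[t0, b], continuous (@ln R \o psi)}.
  apply: within_continuous_comp => // y; rewrite inE => -[x /sub/psi_standing_bounds[_ px _ _] <-].
  exact: continuous_ln.
move=> x.
have h1 := @continuousM R (subspace `[t0, b]) (cst (m%:R / dR))
  (from_subspace `[t0, b] (@ln R)) x (@cst_continuous _ _ _ x) (cln x).
have h2 := @continuousM R (subspace `[t0, b]) (cst (n%:R / dR))
  (from_subspace `[t0, b] (@ln R \o psi)) x (@cst_continuous _ _ _ x) (clnpsi x).
exact: continuousB h1 h2.
Qed.

Lemma sfun_surj {s} : sfun t0 <= s -> exists2 t, t0 <= t & sfun t = s.
Proof.
move=> s0s; pose b := expR s + t0.
have t01 : 1 < t0 by case: psiS.
have es := expR_gt0 s.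
have t0b : t0 <= b by rewrite /b; lra.
have sb : s <= sfun b.
  apply: le_trans (ln_le_sfun t0b).
  by rewrite -[X in X <= _](expRK s) ler_ln ?posrE //; rewrite /b; lra.
have : Num.min (sfun t0) (sfun b) <= s <= Num.max (sfun t0) (sfun b).
  by rewrite ge_min le_max s0s sb orbT.
case/(IVT t0b (continuous_sfun b)) => t; rewrite in_itv /= => /andP[tt0 _] <-.
by exists t.
Qed.

Lemma tofP {s} : sfun t0 <= s -> t0 <= tof m n psi t0 s /\ sfun (tof m n psi t0 s) = s.
Proof.
move=> /sfun_surj[t tt0 st].
by apply: (@xgetPex _ t0 [set t | t0 <= t /\ sfun t = s]); exists t.
Qed.

Lemma sfunK {t} : t0 <= t -> tof m n psi t0 (sfun t) = t.
Proof.
move=> tt0; apply: xget_unique => // t' [t't0 st'].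
by case: (ltgtP t' t) => // [/(ltr_sfun t't0) | /(ltr_sfun tt0)]; rewrite st' ltxx.
Qed.

Lemma rpsi_sfun {t} : t0 <= t -> rpsi (sfun t) = - dR^-1 * ln (t * psi t).
Proof. by move=> tt0; rewrite /Defs.rpsi sfunK. Qed.

Lemma rpsi_sfun_gt0 {t} : t0 <= t -> 0 < rpsi (sfun t).
Proof.
move=> tt0; have [t1 psi0 psi_ub _] := psi_standing_bounds tt0.
rewrite rpsi_sfun // mulNr -mulrN mulr_gt0 ?invr_gt0 // oppr_gt0 ln_lt0 //.
rewrite mulr_gt0 //=; [|lra].
by rewrite -(mulfV (lt0r_neq0 (_ : 0 < t))) ?ltr_pM2l //; lra.
Qed.

Lemma sfunD_ln_psi {t} : t0 <= t -> sfun t + ln (psi t) = - (m%:R * rpsi (sfun t)).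
Proof.
move=> tt0; have [t1 psi0 _ _] := psi_standing_bounds tt0.
rewrite rpsi_sfun // /Defs.sfun lnM ?posrE; [|lra|lra].
by move: (lt0r_neq0 dR_gt0); rewrite /dR natrD => d0; field.
Qed.

Lemma ln_subr_sfun {t} : t0 <= t -> ln t - sfun t = - (n%:R * rpsi (sfun t)).
Proof.
move=> tt0; have [t1 psi0 _ _] := psi_standing_bounds tt0.
rewrite rpsi_sfun // /Defs.sfun lnM ?posrE; [|lra|lra].
by move: (lt0r_neq0 dR_gt0); rewrite /dR natrD => d0; field.
Qed.

Section Solutions.
Variables (alpha : 'I_m -> R) (beta : 'I_n -> R).
Hypotheses (alpha_gt0 : forall i, 0 < alpha i) (sum_alpha : \sum_i alpha i = 1).
Hypotheses (beta_gt0 : forall j, 0 < beta j) (sum_beta : \sum_j beta j = 1).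

Local Notation g := (gmat alpha beta).
Local Notation uA A := (block_mx 1%:M A 0 1%:M).
Local Notation w1 := (omega1 alpha beta).
Local Notation w2 := (omega2 alpha beta).
Local Notation solution := (DI_solution alpha beta psi).

Lemma omega_bounds_alpha i : w2 <= m%:R * alpha i <= w1.
Proof.
apply/andP; split; rewrite /omega2 /omega1 ?ge_min ?le_max.
  by rewrite bigmin_le ?leqnn // orbT.
by rewrite (le_bigmax _ (fun i => m%:R * alpha i)).
Qed.

Lemma omega_bounds_beta j : w2 <= n%:R * beta j <= w1.
Proof.
apply/andP; split; rewrite /omega2 /omega1 ?ge_min ?le_max.
  by rewrite [X in _ || X]bigmin_le ?orbT.
by rewrite (le_bigmax _ (fun j => n%:R * beta j)) orbT.
Qed.

Lemma omega1_gt0 : 0 < w1.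
Proof.
have /andP[_ le_w1] := omega_bounds_alpha (Ordinal m_gt0).
by apply: lt_le_trans le_w1; rewrite mulr_gt0 ?ltr0n.
Qed.

Lemma omega2_gt0 : 0 < w2.
Proof.
rewrite /omega2 lt_min; apply/andP; split; apply: lt_bigmin omega1_gt0 _ => k _.
  by rewrite mulr_gt0 ?ltr0n.
by rewrite mulr_gt0 ?ltr0n.
Qed.

Lemma flow_lshift_lt_iff A t (u : 'cV[int]_m) (v : 'cV[int]_n) i : t0 <= t ->
  `|(g (sfun t) *m uA A *m intmx (col_mx u v)) (lshift n i) 0|
     < expR (- (m%:R * alpha i * rpsi (sfun t)))
  <-> `|(A *m intmx v - intmx (- u)) i 0| `^ (alpha i)^-1 < psi t.
Proof.
move=> tt0; have [_ psi0 _ _] := psi_standing_bounds tt0.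
have -> : (A *m intmx v - intmx (- u)) i 0 = (intmx u + A *m intmx v) i 0.
  by rewrite !mxE rmorphN /= opprK addrC.
rewrite gmat_unipotent_lshift powRV_lt_iff //.
have -> : - (m%:R * alpha i * rpsi (sfun t)) = alpha i * sfun t + alpha i * ln (psi t).
  by rewrite -mulrDr sfunD_ln_psi //; ring.
by rewrite expRD normrM ger0_norm ?expR_ge0 // ltr_pM2l ?expR_gt0.
Qed.

Lemma flow_rshift_lt_iff A t (u : 'cV[int]_m) (v : 'cV[int]_n) j : t0 <= t ->
  `|(g (sfun t) *m uA A *m intmx (col_mx u v)) (rshift m j) 0|
     < expR (- (n%:R * beta j * rpsi (sfun t)))
  <-> `|((v j 0)%:~R : R)| `^ (beta j)^-1 < t.
Proof.
move=> tt0; have [t1 _ _ _] := psi_standing_bounds tt0.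
rewrite gmat_unipotent_rshift powRV_lt_iff //; last lra.
have -> : - (n%:R * beta j * rpsi (sfun t)) = - (beta j * sfun t) + beta j * ln t.
  have -> : - (n%:R * beta j * rpsi (sfun t)) = beta j * - (n%:R * rpsi (sfun t)) by ring.
  by rewrite -ln_subr_sfun //; ring.
by rewrite expRD normrM ger0_norm ?expR_ge0 // ltr_pM2l ?expR_gt0.
Qed.

Lemma unitmx_gmat_unipotent s A : g s *m uA A \in unitmx.
Proof. by rewrite unitmxE det_gmat_unipotent // unitr1. Qed.

Lemma Xd_flow_latticeA s A : Xd (gact alpha beta s (latticeA A)).
Proof. by rewrite /latticeA gact_latt; exists (g s *m uA A); rewrite det_gmat_unipotent. Qed.

Lemma Delta_flow_latticeA_ge0 s A : (0 <= Delta (gact alpha beta s (latticeA A)))%E.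
Proof.
apply: Delta_ge0 => e e0.
have e_gt1 : 1 < expR e by rewrite -expR0 ltr_expR.
have volume1 : (\prod_j expR (beta j * s)) * (\prod_i expR (- (alpha i * s))) = 1.
  by rewrite -!expR_sum -expRD sumrN -!mulr_suml sum_alpha sum_beta mul1r addrN expR0.
have [u [v [uv0 [v_small Av_small]]]] := dirichlet A _ _ _ (ltn_addr n m_gt0)
  (fun j => expR_gt0 _) (fun i => expR_gt0 _) volume1 e_gt1.
exists (g s *m uA A *m intmx (col_mx u v)); split; [|split].
- by rewrite /latticeA gact_latt; exists (col_mx u v).
- exact: mulmx_intmx_neq0 (unitmx_gmat_unipotent s A) uv0.
- apply: supnorm_le => [|l]; first exact: expR_ge0.
  rewrite -[l]splitK; case: (fintype.split l) => [i | j] /=.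
  + rewrite gmat_unipotent_lshift normrM ger0_norm ?expR_ge0 // addrC.
    apply: le_trans (ler_wpM2l (expR_ge0 _) (Av_small i)) _.
    by rewrite mulrCA -expRD addrN expR0 mulr1.
  + rewrite gmat_unipotent_rshift normrM ger0_norm ?expR_ge0 //.
    apply: le_trans (ler_wpM2l (expR_ge0 _) (v_small j)) _.
    by rewrite mulrCA -expRD addNr expR0 mulr1.
Qed.

Lemma short_vector_of_solution {A t p q} : t0 <= t -> solution A t p q ->
  exists v, [/\ gact alpha beta (sfun t) (latticeA A) v, v != 0 &
    supnorm v < expR (- (w2 * rpsi (sfun t)))].
Proof.
move=> tt0 [q0 [p_ok q_ok]]; have r_gt0 := rpsi_sfun_gt0 tt0.
exists (g (sfun t) *m uA A *m intmx (col_mx (- p) q)); split.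
- by rewrite /latticeA gact_latt; exists (col_mx (- p) q).
- apply: mulmx_intmx_neq0 (unitmx_gmat_unipotent _ _) _.
  by rewrite col_mx_eq0 negb_and q0 orbT.
- apply: supnorm_lt => [|l]; first exact: expR_gt0.
  rewrite -[l]splitK; case: (fintype.split l) => [i | j] /=.
  + have := (flow_lshift_lt_iff A t (- p) q i tt0).2; rewrite opprK => /(_ (p_ok i)).
    move/lt_le_trans; apply; rewrite ler_expR lerN2 ler_pM2r //.
    by case/andP: (omega_bounds_alpha i).
  + have /lt_le_trans := (flow_rshift_lt_iff A t (- p) q j tt0).2 (q_ok j); apply.
    rewrite ler_expR lerN2 ler_pM2r //.
    by case/andP: (omega_bounds_beta j).
Qed.

Lemma solution_of_short_vector {A t v} : t0 <= t ->
  gact alpha beta (sfun t) (latticeA A) v -> v != 0 ->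
  supnorm v < expR (- (w1 * rpsi (sfun t))) -> exists p q, solution A t p q.
Proof.
move=> tt0; rewrite /latticeA gact_latt => -[z _ <-] v0 v_short.
rewrite -(vsubmxK z) in v0 v_short *.
set u := usubmx z in v0 v_short *; set q := dsubmx z in v0 v_short *.
have [t1 _ _ _] := psi_standing_bounds tt0.
have r_gt0 := rpsi_sfun_gt0 tt0.
have s_ge0 : 0 <= sfun t by apply: le_trans (ln_le_sfun tt0); rewrite ln_ge0 //; lra.
have coord_lt l : `|(g (sfun t) *m uA A *m intmx (col_mx u q)) l 0| < expR (- (w1 * rpsi (sfun t))).
  exact: le_lt_trans (normr_le_supnorm _ l) v_short.
have q0 : q != 0.
  apply: contraNneq v0 => q0; suff -> : u = 0 by rewrite q0 col_mx0 map_mx0 mulmx0.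
  apply/matrixP => i k; rewrite (ord1 k) [RHS]mxE; apply/eqP/negPn/negP => ui0.
  have := coord_lt (lshift n i); rewrite gmat_unipotent_lshift q0 map_mx0 mulmx0 addr0 mxE.
  apply/negP; rewrite -leNgt normrM ger0_norm ?expR_ge0 // (@le_trans _ _ 1) //.
    by rewrite -expR0 ler_expR oppr_le0 mulr_ge0 // ltW // omega1_gt0.
  apply: mulr_ege1; last by rewrite norm_intr_ge1 ?intr_int ?intr_eq0.
  by rewrite -expR0 ler_expR mulr_ge0 // ltW.
exists (- u), q; split => //; split => [i | j].
- apply/(flow_lshift_lt_iff A t u q i tt0); apply: lt_le_trans (coord_lt _) _.
  by rewrite ler_expR lerN2 ler_pM2r //; case/andP: (omega_bounds_alpha i).
- apply/(flow_rshift_lt_iff A t u q j tt0); apply: lt_le_trans (coord_lt _) _.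
  by rewrite ler_expR lerN2 ler_pM2r //; case/andP: (omega_bounds_beta j).
Qed.

Section Limsup.
Variables (Cr sstar : R).
Hypothesis Cr_ge1 : 1 <= Cr.
Hypothesis rpsi_slow : forall s1 s2, sstar <= s1 -> s1 <= s2 -> s2 <= s1 + s1 `^ eta ->
  rpsi s2 <= Cr * rpsi s1.

Lemma rpsi_le_next s1 s2 : sstar <= s1 -> 1 <= s1 -> s1 <= s2 <= s1 + 1 ->
  rpsi s2 <= Cr * rpsi s1.
Proof.
move=> ss1 s1_ge1 /andP[s12 s21]; apply: rpsi_slow => //.
have eta_ge0 : 0 <= eta by case: psiS => _ [_ [_ [_ [_ [? _]]]]]; exact: ltW.
by apply: (le_trans s21); rewrite lerD2l -[X in X <= _](powRr0 s1) ler_powR.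
Qed.

Lemma limsup_Eunder_sub_notDI :
  limsupk (s0 m n psi t0) (Eunder alpha beta psi t0 Cr) `<=` ~` DI alpha beta psi.
Proof.
move=> A EA [T DIT].
pose K := (Num.truncn (`|T| + `|sstar|)).+1.
have [k [Kk [s0k [s' [s'_ge0 [s'_lt1 [L [[_ [_ DeltaL] gkL]]]]]]]]] := EA K.
have [T_k sstar_k k_ge1] : [/\ T < k%:R, sstar < k%:R & 1 <= (k%:R : R)].
  have := truncnS_gt (`|T| + `|sstar|); rewrite -/K; rewrite -(ler_nat R) in Kk.
  have : 1 <= (K%:R : R) by rewrite ler1n.
  have := ler_norm T; have := ler_norm sstar; have := normr_ge0 T; have := normr_ge0 sstar.
  by split; lra.
pose s := k%:R + s'.
have [tt0 ts] : t0 <= tof m n psi t0 s /\ sfun (tof m n psi t0 s) = s.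
  by apply: tofP; move: s0k; rewrite /s0 /s; lra.
set t := tof m n psi t0 s in tt0 ts.
have [p [q sol]] : exists p q, solution A t p q.
  by apply: DIT; have := sfun_le tt0; rewrite ts /s; lra.
have [v [Lv v0 v_short]] := short_vector_of_solution tt0 sol.
have LE : L = gact alpha beta s (latticeA A).
  by rewrite -[L](gact0 alpha beta) -(subrr s') -gactD -gkL gactD addrC.
have r_next : rpsi (k.+1)%:R <= Cr * rpsi s.
  by apply: rpsi_le_next; rewrite /s -?natr1; [lra | lra | apply/andP; split; lra].
move/Delta_leP: DeltaL => /(_ v); rewrite LE -ts => /(_ Lv v0).
apply/negP; rewrite -ltNge; apply: (lt_le_trans v_short).
rewrite ler_expR lerN2 -mulrA ler_wpM2l ?(ltW omega2_gt0) //.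
have Cr_gt0 : 0 < Cr := lt_le_trans ltr01 Cr_ge1.
by rewrite ler_pdivrMl // ts.
Qed.

Lemma notDI_sub_limsup_Ebar :
  ~` DI alpha beta psi `<=` limsupk (s0 m n psi t0) (Ebar alpha beta psi t0 Cr).
Proof.
move=> A notDI K.
pose B := `|sstar| + `|s0 m n psi t0| + K%:R + 2.
have [t [Tt no_sol]] : exists t, expR B + t0 <= t /\ ~ exists p q, solution A t p q.
  apply: contrapT => sols; apply: notDI; exists (expR B + t0) => t Tt.
  by apply: contrapT => no_sol; apply: sols; exists t.
have t0_gt1 : 1 < t0 by case: psiS.
have tt0 : t0 <= t by have := expR_gt0 B; lra.
pose s := sfun t.
have Bs : B <= s.
  apply: le_trans (ln_le_sfun tt0).
  by rewrite -[X in X <= _](expRK B) ler_ln ?posrE ?expR_gt0 //; lra.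
rewrite /B in Bs.
have s_ge0 : 0 <= s.
  by have := normr_ge0 sstar; have := normr_ge0 (s0 m n psi t0); have := ler0n R K; lra.
pose k := Num.truncn s.
have /andP[k_s s_k] := truncn_itv s_ge0; rewrite -/k -natr1 in k_s s_k.
have [sstar_k s0_k K_k k_ge1] :
    [/\ sstar <= k%:R, s0 m n psi t0 <= k%:R, (K%:R : R) <= k%:R & 1 <= (k%:R : R)].
  have := ler_norm sstar; have := ler_norm (s0 m n psi t0).
  by have := normr_ge0 sstar; have := normr_ge0 (s0 m n psi t0); have := ler0n R K; split; lra.
exists k; split; [by rewrite -(ler_nat R); lra | split => //].
exists (s - k%:R); split; [lra | split; [lra |]].
exists (gact alpha beta s (latticeA A)); split; last by rewrite gactD; congr gact; ring.
split; [exact: Xd_flow_latticeA | split; first exact: Delta_flow_latticeA_ge0].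
apply/Delta_leP => v Lv v0; rewrite leNgt; apply/negP => v_short.
apply: no_sol; apply: (solution_of_short_vector tt0 Lv v0).
apply: (lt_le_trans v_short); rewrite ler_expR lerN2 -mulrA.
apply: ler_wpM2l; first exact: ltW omega1_gt0.
by rewrite -/s; apply: rpsi_le_next; [lra | lra | apply/andP; split; lra].
Qed.

End Limsup.

End Solutions.

End Parametrisation.

Lemma sum_eq1_gt0 {R : numDomainType} {k} (f : 'I_k -> R) : \sum_i f i = 1 -> (0 < k)%N.
Proof. by case: k f => [|k] f //; rewrite big_ord0 => /eqP; rewrite eq_sym oner_eq0. Qed.

Theorem lemma3p5 (R : realType) (m n : nat) (alpha : 'I_m -> R) (beta : 'I_n -> R)
  (psi : R -> R) (t0 Cpsi eta Cr sstar : R) :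
  (forall i, 0 < alpha i) -> \sum_(i < m) alpha i = 1 ->
  (forall j, 0 < beta j) -> \sum_(j < n) beta j = 1 ->
  psi_standing psi t0 Cpsi eta ->
  1 <= Cr -> s0 m n psi t0 <= sstar ->
  (forall s1 s2, sstar <= s1 -> s1 <= s2 -> s2 <= s1 + s1 `^ eta ->
     rpsi m n psi t0 s2 <= Cr * rpsi m n psi t0 s1) ->
  limsupk (s0 m n psi t0) (Eunder alpha beta psi t0 Cr)
    `<=` ~` DI alpha beta psi /\
  ~` DI alpha beta psi
    `<=` limsupk (s0 m n psi t0) (Ebar alpha beta psi t0 Cr).
Proof.
move=> alpha_gt0 sum_alpha beta_gt0 sum_beta psiS Cr_ge1 _ rpsi_slow.
have m_gt0 := sum_eq1_gt0 _ sum_alpha; have n_gt0 := sum_eq1_gt0 _ sum_beta.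
split.
- exact: limsup_Eunder_sub_notDI psiS m_gt0 n_gt0 _ _ alpha_gt0 sum_alpha beta_gt0 sum_beta
    _ _ Cr_ge1 rpsi_slow.
- exact: notDI_sub_limsup_Ebar psiS m_gt0 n_gt0 _ _ alpha_gt0 sum_alpha beta_gt0 sum_beta
    _ _ rpsi_slow.
Qed.
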